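(* Let $K$ be a finite field of characteristic $p$ and order $q=p^n$, and let $s$ be a positive integer with $\gcd(s,q-1)=1$. Let $\gamma$ be a primitive element of $\mathbb{F}_p$, let $\sigma\in\mathrm{Gal}(\mathbb{Q}(\zeta)/\mathbb{Q})$ be the automorphism with $\sigma(\zeta)=\zeta^\gamma$, and let $\tau$ be the permutation of $\mathcal{W}_{K,s}$ obtained by restricting $\sigma$. Then the following quantities are all equal: (i) the order of the permutation $\tau$; (ii) the degree $[\mathbb{Q}(\mathcal{W}_{K,s}):\mathbb{Q}]$; (iii) the order of $\gamma^{1-1/s}$ in $\mathbb{F}_p^\times$, where $1/s$ denotes the inverse of $s$ modulo $p-1$; (iv) $(p-1)/\gcd(p-1,s-1)$. Moreover, if $m$ denotes this common value, then $m=1$ when $p=2$, and $p\equiv 1\pmod{2m}$ when $p>2$.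
   Context: $\zeta=\exp(2\pi i/p)$, $\psi(x)=\zeta^{\mathrm{Tr}(x)}$ where $\mathrm{Tr}\colon K\to\mathbb{F}_p$ is the absolute trace; for $u\in K$, $W_u=\sum_{x\in K}\psi(x^s-ux)$, and $\mathcal{W}_{K,s}=\{W_u:u\in K^\times\}$. It is known that $\sigma(W_u)=W_{\gamma^{1-1/s}u}$ for all $u\in K$ (with $1/s$ the inverse of $s$ modulo $p-1$), so $\sigma$ maps $\mathcal{W}_{K,s}$ to itself. *)

From HB Require Import structures.
From mathcomp Require Import all_boot all_order all_algebra all_field.
Set Implicit Arguments. Unset Strict Implicit. Unset Printing Implicit Defensive.
Import GRing.Theory Num.Theory.
Local Open Scope ring_scope.

(* Absolute trace K -> F_p, for #|K| = p^n:  Tr x = \sum_(i<n) x^(p^i).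
   Its value lies in the prime subfield {k%:R : k < p}. *)
Definition abs_trace (K : finFieldType) (p n : nat) (x : K) : K :=
  \sum_(i < n) x ^+ (p ^ i).

Definition trace_nat (K : finFieldType) (p n : nat) (x : K) : nat :=
  if [pick k : 'I_p | (k%:R : K) == abs_trace p n x] is Some k then nat_of_ord k else 0%N.

Definition psi (K : finFieldType) (p n : nat) (zeta : algC) (x : K) : algC :=
  zeta ^+ trace_nat p n x.

Definition Wsum (K : finFieldType) (p n s : nat) (zeta : algC) (u : K) : algC :=
  \sum_(x : K) psi p n zeta (x ^+ s - u * x).

Definition Wlist (K : finFieldType) (p n s : nat) (zeta : algC) : seq algC :=
  [seq Wsum p n s zeta u | u <- enum K & u != 0].

(* [Q(S) : Q] for a finite list S of algebraic numbers: the Q-dimension of a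
   number field generated over Q by (a copy of) S, as provided by
   num_field_exists. *)
Definition degQ (S : seq algC) : nat :=
  \dim {: projT1 (num_field_exists S)}%VS.

Definition perm_order_on (sig : algC -> algC) (S : seq algC) (m : nat) : Prop :=
  [/\ (0 < m)%N,
      (forall w, w \in S -> iter m sig w = w) &
      (forall k, (0 < k)%N -> (forall w, w \in S -> iter k sig w = w) -> (m <= k)%N)].

(* sigma acts on additive characters by psi x |-> psi (gamma x); substituting
   x := gamma^(-t) x in W_u and using s t = 1 (mod p - 1) gives
   sigma (W_u) = W_(c u) with c = gamma^(1 - t) read in K.  Fourier inversion
   recovers psi (x^s) from the W_u, and x |-> x^s is bijective on K, so
   sigma^k fixes every W_u iff c^k = 1, i.e. iff m divides k, m being the order
   of gamma^(1 - t), namely (p - 1) / gcd(p - 1, s - 1).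
   For the degree: Q(W) lies in Q(zeta) and is fixed by sigma^m, hence lies in
   the Q-span of the m Gaussian periods sum_(e = j mod m) zeta^(gamma^e), so
   [Q(W) : Q] <= m; conversely sigma^0, ..., sigma^(m-1) restrict to m distinct
   embeddings of Q(W) into algC, and Dedekind's independence of characters
   gives [Q(W) : Q] >= m. *)

From HB Require Import structures.
From mathcomp Require Import all_boot all_order all_algebra all_field.
From mathcomp Require Import ring.
Import GRing.Theory Num.Theory.
Local Open Scope ring_scope.
Set Implicit Arguments. Unset Strict Implicit. Unset Printing Implicit Defensive.

Section PrimeSubfield.
Variables (K : finFieldType) (p : nat).
Hypothesis chK : p \in [pchar K].

Lemma pchar_natr_eq a b : ((a%:R : K) == b%:R) = (a == b %[mod p]).
Proof.
wlog le_ab: a b / (a <= b)%N.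
  by move=> IH; case/orP: (leq_total a b) => /IH //; rewrite eq_sym => ->.
by rewrite [in RHS]eq_sym eqn_mod_dvd // (dvdn_pcharf chK) natrB // subr_eq0 eq_sym.
Qed.

(* The p elements k%:R, k < p, already exhaust the at most p roots of 'X^p - 'X. *)
Lemma pFrobenius_fixed_natr (y : K) : y ^+ p = y -> exists2 k, (k < p)%N & y = k%:R.
Proof.
move=> yp; have p_gt1 := prime_gt1 (pcharf_prime chK).
have [k /eqP yk|ny] := pickP [pred k : 'I_p | y == k%:R]; first by exists k.
pose P : {poly K} := 'X^p - 'X.
have sizeP : size P = p.+1.
  by rewrite /P size_polyDl ?size_polyXn // size_polyN size_polyX ltnS.
have rootP z : z ^+ p = z -> root P z.
  by move=> zp; rewrite /root !hornerE zp subrr.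
pose rs := y :: [seq (k%:R : K) | k <- iota 0 p].
have rs_roots : all (root P) rs.
  rewrite /= rootP //=; apply/allP => _ /mapP[k _ ->].
  by apply: rootP; rewrite -(pFrobenius_autE chK) rmorph_nat.
have rs_uniq : uniq rs.
  rewrite /= map_inj_in_uniq ?iota_uniq ?andbT; last first.
    move=> a b; rewrite !mem_iota !add0n => /andP[_ ap] /andP[_ bp] /eqP.
    by rewrite pchar_natr_eq !modn_small // => /eqP.
  apply/mapP => -[k]; rewrite mem_iota add0n => /andP[_ kp] yk.
  by have := ny (Ordinal kp); rewrite /= yk eqxx.
have P_neq0 : P != 0 by rewrite -size_poly_eq0 sizeP.
by have := max_poly_roots P_neq0 rs_roots rs_uniq; rewrite sizeP /= size_map size_iota ltnn.
Qed.

Section Trace.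
Variable n : nat.
Hypothesis cardK : #|K| = (p ^ n)%N.
Local Notation Tr := (@abs_trace K p n).

Lemma abs_traceD x y : Tr (x + y) = Tr x + Tr y.
Proof.
rewrite /abs_trace -big_split; apply: eq_bigr => i _; apply: exprDn_pchar.
by rewrite pnatX (pnatE _ (pcharf_prime chK)) chK.
Qed.

Lemma abs_trace0 : Tr 0 = 0.
Proof.
rewrite /abs_trace big1 // => i _.
by rewrite expr0n expn_eq0 eqn0Ngt prime_gt0 // (pcharf_prime chK).
Qed.

Lemma abs_traceMn x k : Tr (x *+ k) = Tr x *+ k.
Proof. by elim: k => [|k IH]; rewrite ?mulr0n ?abs_trace0 // !mulrS abs_traceD IH. Qed.

Lemma abs_trace_pFrobenius x : Tr x ^+ p = Tr x.
Proof.
rewrite /abs_trace -(pFrobenius_autE chK) rmorph_sum /=.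
under eq_bigr do rewrite pFrobenius_autE -exprM -expnSr.
case: n cardK => [|n'] cK; first by rewrite !big_ord0.
rewrite big_ord_recr big_ord_recl /= -cK expf_card expn0 expr1 addrC.
by congr (_ + _); apply: eq_bigr => i _.
Qed.

Lemma trace_nat_spec (x : K) : (trace_nat p n x)%:R = Tr x /\ (trace_nat p n x < p)%N.
Proof.
rewrite /trace_nat; case: pickP => [k /eqP -> | nk]; first by split.
have [k kp def_Tr] := pFrobenius_fixed_natr (abs_trace_pFrobenius x).
by have := nk (Ordinal kp); rewrite /= def_Tr eqxx.
Qed.

Lemma trace_natR (x : K) : (trace_nat p n x)%:R = Tr x.
Proof. by case: (trace_nat_spec x). Qed.

Lemma trace_nat_lt (x : K) : (trace_nat p n x < p)%N.
Proof. by case: (trace_nat_spec x). Qed.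

Lemma trace_natD (x y : K) :
  trace_nat p n (x + y) = (trace_nat p n x + trace_nat p n y)%N %[mod p].
Proof. by apply/eqP; rewrite -pchar_natr_eq natrD !trace_natR abs_traceD. Qed.

Lemma trace_nat_natrM g (x : K) :
  trace_nat p n (g%:R * x) = (g * trace_nat p n x)%N %[mod p].
Proof.
by apply/eqP; rewrite -pchar_natr_eq natrM !trace_natR !mulr_natl abs_traceMn.
Qed.

Lemma trace_nat_eq0 (x : K) : (trace_nat p n x == 0%N) = (Tr x == 0).
Proof.
by rewrite -trace_natR -[0 in RHS]/(0%:R) pchar_natr_eq mod0n modn_small ?trace_nat_lt.
Qed.

(* The trace is a polynomial of degree p ^ n.-1 < #|K|, so it cannot vanish on all of K. *)
Lemma abs_trace_neq0 : exists y, Tr y != 0.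
Proof.
have p_gt1 := prime_gt1 (pcharf_prime chK).
have [n' def_n] : exists n', n = n'.+1.
  case: n cardK => [|n'] cK; last by exists n'.
  have : (1 < #|K|)%N by apply/card_gt1P; exists 0, 1; rewrite eq_sym oner_neq0.
  by rewrite cK.
have [y Try|Tr0] := pickP (fun y => Tr y != 0); first by exists y.
pose P : {poly K} := \sum_(i < n) 'X^(p ^ i).
have sizeP : size P = (p ^ n').+1.
  rewrite /P def_n; elim: n' {def_n} => [|k IH]; first by rewrite big_ord1 size_polyXn.
  rewrite big_ord_recr /= addrC size_polyDl size_polyXn // IH ltnS.
  by rewrite ltn_exp2l.
have P_roots : all (root P) (enum K).
  apply/allP => y _; rewrite /root horner_sum.
  rewrite (eq_bigr (fun i : 'I_n => y ^+ (p ^ i))) => [|i _]; last exact: hornerXn.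
  exact: negbFE (Tr0 y).
have := max_poly_roots _ P_roots (enum_uniq _).
rewrite -size_poly_eq0 sizeP -cardE cardK def_n ltnS expnS leqNgt.
by rewrite -[X in (X < _)%N]mul1n ltn_mul2r expn_gt0 (ltnW p_gt1) p_gt1 => /(_ isT).
Qed.

End Trace.
End PrimeSubfield.

Section AdditiveCharacter.
Variables (K : finFieldType) (p n : nat) (zeta : algC).
Hypotheses (chK : p \in [pchar K]) (cardK : #|K| = (p ^ n)%N).
Hypothesis zeta_prim : p.-primitive_root zeta.
Local Notation psi := (@psi K p n zeta).

Lemma psiD (x y : K) : psi (x + y) = psi x * psi y.
Proof.
rewrite /psi -exprD -(prim_expr_mod zeta_prim) (trace_natD chK cardK).
by rewrite (prim_expr_mod zeta_prim).
Qed.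

Lemma psi0 : psi 0 = 1.
Proof.
by rewrite /psi (eqP (_ : trace_nat p n 0 == 0%N)) // (trace_nat_eq0 chK cardK) abs_trace0.
Qed.

Lemma psi_eq1 (x : K) : (psi x == 1) = (abs_trace p n x == 0).
Proof.
rewrite /psi -(prim_order_dvd zeta_prim) -(trace_nat_eq0 chK cardK).
by rewrite /dvdn modn_small // (trace_nat_lt chK).
Qed.

Lemma psi_natrM (sigma : {rmorphism algC -> algC}) (g : nat) :
  sigma zeta = zeta ^+ g -> forall x : K, sigma (psi x) = psi (g%:R * x).
Proof.
move=> sigma_zeta x; rewrite /psi rmorphXn sigma_zeta -exprM -(prim_expr_mod zeta_prim).
by rewrite -(trace_nat_natrM chK cardK) (prim_expr_mod zeta_prim).
Qed.

Lemma psi_scale_eq1 (e : K) : (forall y, psi (e * y) = psi y) -> e = 1.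
Proof.
move=> psi_e; apply/eqP/negPn/negP => e_neq1.
have [z Trz] := abs_trace_neq0 chK cardK; have e1_neq0 : e - 1 != 0 by rewrite subr_eq0.
have : psi ((e - 1) * ((e - 1)^-1 * z)) == 1.
  by rewrite mulrBl mul1r psiD psi_e -psiD subrr psi0.
by rewrite mulVKf // psi_eq1 (negPf Trz).
Qed.

(* For y != 0 the sum is unchanged when multiplied by some psi z != 1. *)
Lemma sum_psi_mul (y : K) : \sum_x psi (y * x) = if y == 0 then #|K|%:R else 0.
Proof.
have [->|y_neq0] := eqVneq y 0.
  by under eq_bigr do rewrite mul0r psi0; rewrite sumr_const.
have [z Trz] := abs_trace_neq0 chK cardK.
set S := \sum_x _; have : S = S * psi z.
  rewrite {1}/S (reindex_inj (addIr (y^-1 * z))) /= mulr_suml.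
  by apply: eq_bigr => x _; rewrite mulrDr mulVKf // psiD.
move/eqP; rewrite -subr_eq0 -{1}[S]mulr1 -mulrBr mulf_eq0 subr_eq0 [1 == _]eq_sym psi_eq1.
by rewrite (negPf Trz) orbF => /eqP.
Qed.

End AdditiveCharacter.

Section Wsums.
Variables (K : finFieldType) (p n s : nat) (zeta : algC).
Hypotheses (chK : p \in [pchar K]) (cardK : #|K| = (p ^ n)%N).
Hypotheses (zeta_prim : p.-primitive_root zeta).
Hypotheses (s_gt0 : (0 < s)%N) (s_coprime : coprime s (p ^ n).-1).
Local Notation psi := (@psi K p n zeta).
Local Notation W := (@Wsum K p n s zeta).

Lemma rmorph_Wsum (sigma : {rmorphism algC -> algC}) (g d : K) :
  (forall x, sigma (psi x) = psi (g * x)) -> d != 0 -> g * d ^+ s = 1 ->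
  forall u, sigma (W u) = W (g * d * u).
Proof.
move=> sigma_psi d_neq0 gds u; rewrite /Wsum rmorph_sum (reindex_inj (mulfI d_neq0)) /=.
apply: eq_bigr => x _; rewrite sigma_psi; congr psi.
by rewrite exprMn mulrBr mulrA gds mul1r; ring.
Qed.

Lemma iter_Wsum (f : algC -> algC) (c : K) :
  (forall u, f (W u) = W (c * u)) -> forall k u, iter k f (W u) = W (c ^+ k * u).
Proof.
move=> fW; elim=> [|k IH] u; first by rewrite expr0 mul1r.
by rewrite iterS IH fW mulrA -exprS.
Qed.

Lemma Wsum_fourier (z : K) : \sum_u W u * psi (u * z) = #|K|%:R * psi (z ^+ s).
Proof.
rewrite /Wsum; under eq_bigr do rewrite mulr_suml; rewrite exchange_big /=.
transitivity (\sum_x psi (x ^+ s) * \sum_u psi ((z - x) * u)).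
  apply: eq_bigr => x _; rewrite mulr_sumr; apply: eq_bigr => u _.
  by rewrite -!(psiD chK cardK zeta_prim); congr psi; ring.
under eq_bigr do rewrite (sum_psi_mul chK cardK zeta_prim).
rewrite (bigD1 z) //= subrr eqxx big1 ?addr0 1?mulrC // => x /negPf z_neq_x.
by rewrite subr_eq0 eq_sym z_neq_x mulr0.
Qed.

Lemma expr_coprime_inverse : exists k, forall y : K, (y ^+ s) ^+ k = y.
Proof.
have expK j (y : K) : y ^+ (j * (p ^ n).-1 + 1) = y.
  elim: j => [|j IH]; first by rewrite mul0n add0n expr1.
  rewrite mulSn -addnA exprD IH -exprSr prednK -cardK ?expf_card //.
  by apply/card_gt0P; exists 0.
have [k k' def_sk _] := egcdnP (p ^ n).-1 s_gt0.
by exists k => y; rewrite -exprM mulnC def_sk (eqP s_coprime) expK.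
Qed.

Lemma Wsum_scale_eq1 (c : K) : c != 0 -> (forall u, W (c * u) = W u) -> c = 1.
Proof.
move=> c_neq0 Wc; have [k expK] := expr_coprime_inverse.
have K_neq0 : (#|K|%:R : algC) != 0.
  by rewrite pnatr_eq0 -lt0n; apply/card_gt0P; exists 0.
have psi_s z : psi ((c^-1 * z) ^+ s) = psi (z ^+ s).
  apply: (mulfI K_neq0); rewrite -!Wsum_fourier (reindex_inj (mulfI c_neq0)) /=.
  by apply: eq_bigr => u _; rewrite Wc mulrCA -mulrA mulKf.
have psi_scale y : psi ((c^-1) ^+ s * y) = psi y.
  by rewrite -[y]expK exprAC -exprMn psi_s.
have := psi_scale_eq1 chK cardK zeta_prim psi_scale.
rewrite exprVn => /eqP; rewrite invr_eq1 => /eqP cs1.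
by rewrite -[c]expK cs1 expr1n.
Qed.

Lemma Wsum_in_Wlist (u : K) : u != 0 -> W u \in Wlist K p n s zeta.
Proof. by move=> u_neq0; apply/mapP; exists u; rewrite // mem_filter u_neq0 mem_enum. Qed.

Lemma Wlist_iter_fixed_iff (f : algC -> algC) (c : K) :
  (forall u, f (W u) = W (c * u)) -> c != 0 ->
  forall k, {in Wlist K p n s zeta, forall w, iter k f w = w} <-> c ^+ k = 1.
Proof.
move=> fW c_neq0 k; split=> [fixW | ck1 _ /mapP[u _ ->]]; last first.
  by rewrite (iter_Wsum fW) ck1 mul1r.
apply: Wsum_scale_eq1 => [|u]; first exact: expf_neq0.
have [->|u_neq0] := eqVneq u 0; first by rewrite mulr0.
by rewrite -(iter_Wsum fW) fixW ?Wsum_in_Wlist.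
Qed.

End Wsums.

Lemma exists_left_kernel (F : fieldType) r c (A : 'M[F]_(r, c)) :
  (c < r)%N -> exists2 v : 'rV_r, v != 0 & v *m A = 0.
Proof.
move=> lt_cr; have : kermx A != 0.
  by rewrite kermx_eq0 /row_free neq_ltn (leq_ltn_trans (rank_leq_col A)).
by case/rowV0Pn=> v /sub_kermxP vA v_neq0; exists v.
Qed.

(* Dedekind: given i, choose j != i and y separating phi i from phi j; combining the
   relation at y * x and at x eliminates phi j, and induction applies to the others. *)
Lemma monoid_morphism_independent (L : pzSemiRingType) (R : idomainType) k
    (phi : 'I_k -> L -> R) (v : 'I_k -> R) :
  (forall i, monoid_morphism (phi i)) ->
  (forall i j, i != j -> exists y, phi i y != phi j y) ->
  (forall x, \sum_i v i * phi i x = 0) -> forall i, v i = 0.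
Proof.
elim: k phi v => [|k IH] phi v phiM phi_neq sum0 i; first by case: i.
have [j j_neq_i | only_i] := pickP (fun j => j != i); last first.
  have := sum0 1; rewrite (big_pred1 i) ?(phiM i).1 ?mulr1 // => j.
  by rewrite /= -(negbK (j == i)) only_i.
have [y phi_ij] : exists y, phi i y != phi j y by apply: phi_neq; rewrite eq_sym.
pose w l := v (lift j l) * (phi (lift j l) y - phi j y).
have sum_lift z : \sum_(l < k) v (lift j l) * phi (lift j l) z = - (v j * phi j z).
  by have := sum0 z; rewrite (bigD1_ord j) //= => /eqP; rewrite addrC addr_eq0 => /eqP.
have sum_w x : \sum_l w l * phi (lift j l) x = 0.
  transitivity (\sum_l v (lift j l) * phi (lift j l) (y * x)
                - phi j y * \sum_l v (lift j l) * phi (lift j l) x).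
    rewrite mulr_sumr -sumrB; apply: eq_bigr => l _.
    by rewrite /w (phiM _).2; ring.
  by rewrite !sum_lift (phiM j).2; ring.
have [l def_i|eq_ji] := unliftP j i; last by rewrite eq_ji eqxx in j_neq_i.
have lift_neq a b : a != b -> exists y, phi (lift j a) y != phi (lift j b) y.
  by move=> a_neq_b; apply: phi_neq; rewrite (inj_eq lift_inj).
have := IH _ w (fun l => phiM _) lift_neq sum_w l.
by rewrite /w -def_i => /eqP; rewrite mulf_eq0 subr_eq0 (negPf phi_ij) orbF => /eqP.
Qed.

Section DimensionBounds.
Variable L : fieldExtType rat.

Lemma dim_leq_span (R : numFieldType) m (f : {rmorphism L -> R}) (eta : 'I_m -> R) :
  (forall y, exists a : 'rV[rat]_m, f y = \sum_j ratr (a 0 j) * eta j) ->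
  (\dim {:L} <= m)%N.
Proof.
move=> f_span; rewrite leqNgt; apply/negP => lt_md.
have [A defA] := fin_all_exists (fun j : 'I_(\dim {:L}) => f_span (vbasis {:L})`_j).
pose M := \matrix_(j, i) A j 0 i.
have [v v_neq0 vM0] := exists_left_kernel M lt_md.
suff : \sum_j v 0 j *: (vbasis {:L})`_j = 0.
  move/freeP: (basis_free (vbasisP {:L})) => free_b /free_b v0.
  by case/eqP: v_neq0; apply/rowP => j; rewrite mxE v0.
apply: (fmorph_inj f); rewrite rmorph0 rmorph_sum /=.
under eq_bigr do rewrite rmorphZ_num defA mulr_sumr.
rewrite exchange_big /=; apply: big1 => i _.
transitivity (ratr ((v *m M) 0 i) * eta i); last by rewrite vM0 mxE rmorph0 mul0r.
rewrite mxE rmorph_sum mulr_suml; apply: eq_bigr => j _.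
by rewrite mxE mulrA rmorphM.
Qed.

Lemma dim_geq_embeddings (R : fieldType) m (phi : 'I_m -> {rmorphism L -> R}) :
  (forall i j, i != j -> exists y, phi i y != phi j y) -> (m <= \dim {:L})%N.
Proof.
move=> phi_neq; rewrite leqNgt; apply/negP => lt_dm.
pose M : 'M[R]_(m, \dim {:L}) := \matrix_(i, j) phi i (vbasis {:L})`_j.
have [v v_neq0 vM0] := exists_left_kernel M lt_dm.
have sum0 x : \sum_i v 0 i * phi i x = 0.
  rewrite (coord_vbasis (memvf x)).
  transitivity (\sum_j ratr (coord (vbasis {:L}) j x) * (v *m M) 0 j).
    under eq_bigr do rewrite rmorph_sum mulr_sumr.
    rewrite exchange_big /=; apply: eq_bigr => j _.
    rewrite mxE mulr_sumr; apply: eq_bigr => i _.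
    by rewrite mxE rmorphZ_num mulrCA.
  by rewrite vM0; apply: big1 => j _; rewrite mxE mulr0.
have v0 := monoid_morphism_independent (fun i => rmorphism_monoidP (phi i)) phi_neq sum0.
by case/eqP: v_neq0; apply/rowP => i; rewrite mxE v0.
Qed.

End DimensionBounds.

Section IterRMorphism.
Variables (R : pzRingType) (f : {rmorphism R -> R}) (k : nat).

Definition rmorph_iter : R -> R := iter k f.

Fact rmorph_iter_is_zmod_morphism : zmod_morphism rmorph_iter.
Proof. by rewrite /rmorph_iter; elim: k => // k' IH x y /=; rewrite IH rmorphB. Qed.

Fact rmorph_iter_is_monoid_morphism : monoid_morphism rmorph_iter.
Proof.
rewrite /rmorph_iter; split; first by elim: k => //= k' ->; rewrite rmorph1.
by elim: k => // k' IH x y /=; rewrite IH rmorphM.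
Qed.

HB.instance Definition _ :=
  GRing.isZmodMorphism.Build R R rmorph_iter rmorph_iter_is_zmod_morphism.
HB.instance Definition _ :=
  GRing.isMonoidMorphism.Build R R rmorph_iter rmorph_iter_is_monoid_morphism.

Lemma iter_rmorphD x y : iter k f (x + y) = iter k f x + iter k f y.
Proof. exact: rmorphD rmorph_iter x y. Qed.

Lemma iter_rmorphM x y : iter k f (x * y) = iter k f x * iter k f y.
Proof. exact: rmorphM rmorph_iter x y. Qed.

End IterRMorphism.

Section PrimeField.
Variables (p : nat) (gamma : 'F_p).
Hypotheses (p_pr : prime p) (gamma_prim : (p.-1).-primitive_root gamma).

Lemma Fp_valM (a b : 'F_p) : val (a * b) = (val a * val b %% p)%N.
Proof. by rewrite -val_Fp_nat // natrM !natr_Zp. Qed.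

Lemma Fp_val_lt (a : 'F_p) : (val a < p)%N.
Proof. by rewrite -[X in (_ < X)%N](Fp_cast p_pr) ltn_ord. Qed.

Lemma sum_Fp (V : nmodType) (F : 'F_p -> V) : \sum_a F a = \sum_(k < p) F k%:R.
Proof.
transitivity (\sum_(a : 'F_p) F (val a)%:R); first by apply: eq_bigr => a _; rewrite natr_Zp.
by rewrite -(big_mkord xpredT (fun k => F k%:R)) (Fp_cast p_pr) big_mkord.
Qed.

Lemma Fp_fermat (a : 'F_p) : a != 0 -> a ^+ p.-1 = 1.
Proof.
move=> a_neq0; apply: (mulIf a_neq0); rewrite mul1r -exprSr prednK ?prime_gt0 //.
by have := expf_card a; rewrite card_Fp.
Qed.

Lemma prim_root_Fp_neq0 : gamma != 0.
Proof. by rewrite (prim_root_eq0 gamma_prim) -lt0n -subn1 subn_gt0 prime_gt1. Qed.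

Lemma sum_Fp_units (V : nmodType) (F : 'F_p -> V) :
  \sum_(a | a != 0) F a = \sum_(e < p.-1) F (gamma ^+ e).
Proof.
have inj : {in [set: 'I_p.-1] &, injective (fun e : 'I_p.-1 => gamma ^+ e)}.
  move=> i j _ _ /eqP; rewrite (eq_prim_root_expr gamma_prim) !modn_small // => /eqP.
  exact: val_inj.
transitivity (\sum_(a in [set gamma ^+ val e | e in [set: 'I_p.-1]]) F a).
  apply: eq_bigl => a; apply/idP/imsetP => [a_neq0|[e _ ->]].
    by have [e ->] := prim_rootP gamma_prim (Fp_fermat a_neq0); exists e; rewrite ?inE.
  by rewrite expf_neq0 // prim_root_Fp_neq0.
by rewrite big_imset //=; apply: eq_bigl => e; rewrite inE.
Qed.

End PrimeField.

Definition in_Qzeta (zeta x : algC) := exists q : {poly rat}, x = (map_poly ratr q).[zeta].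

Section GaussPeriods.
Variables (p : nat) (zeta : algC) (gamma : 'F_p) (sigma : {rmorphism algC -> algC}).
Hypotheses (p_pr : prime p) (zeta_prim : p.-primitive_root zeta).
Hypotheses (gamma_prim : (p.-1).-primitive_root gamma) (sigma_zeta : sigma zeta = zeta ^+ gamma).

Lemma zeta_expr_natFp k : zeta ^+ (k%:R : 'F_p) = zeta ^+ k.
Proof. by rewrite val_Fp_nat // (prim_expr_mod zeta_prim). Qed.

Lemma sum_zeta_Fp : \sum_(a : 'F_p) zeta ^+ a = 0.
Proof.
rewrite sum_Fp //; under eq_bigr do rewrite zeta_expr_natFp.
have /esym/eqP := subrX1 zeta p; rewrite (prim_expr_order zeta_prim) subrr.
rewrite mulf_eq0 subr_eq0 => /orP[/eqP zeta1|/eqP //].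
have := prim_order_dvd zeta_prim 1; rewrite expr1 zeta1 eqxx dvdn1 => /eqP p1.
by have := prime_gt1 p_pr; rewrite p1.
Qed.

Lemma iter_sigma_zeta k (a : 'F_p) : iter k sigma (zeta ^+ a) = zeta ^+ (gamma ^+ k * a)%R.
Proof.
elim: k => [|k IH]; first by rewrite expr0 mul1r.
rewrite iterS IH rmorphXn sigma_zeta -exprM exprS -mulrA (Fp_valM p_pr gamma).
by rewrite (prim_expr_mod zeta_prim).
Qed.

(* The minimal polynomial of zeta over Q is the p-th cyclotomic polynomial, of size p. *)
Lemma root_zeta_Qpoly_eq0 (q : {poly rat}) :
  (size q < p)%N -> root (map_poly ratr q) zeta -> q = 0.
Proof.
move=> size_q root_q; have [q0 [min_q0 _] root_q0] := minCpolyP zeta.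
have size_q0 : size q0 = p.
  have := congr1 (fun q : {poly algC} => size q) min_q0.
  rewrite size_map_poly (minCpoly_cyclotomic zeta_prim) size_cyclotomic.
  by rewrite totient_prime // prednK ?prime_gt0.
apply/eqP; apply: contraTT size_q => q_neq0.
by rewrite -leqNgt -size_q0 dvdp_leq // -root_q0.
Qed.

Lemma zeta_Fp_relation (c : 'F_p -> rat) :
  \sum_a ratr (c a) * zeta ^+ a = 0 -> forall a, c a = c 0.
Proof.
move=> rel_c; pose d a := c a - c 0.
have rel_d : \sum_a ratr (d a) * zeta ^+ a = 0.
  under eq_bigr do rewrite rmorphB mulrBl.
  by rewrite sumrB rel_c -mulr_sumr sum_zeta_Fp mulr0 subrr.
pose P : {poly rat} := \poly_(k < p.-1) d (k.+1)%:R.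
have P0 : P = 0.
  apply: root_zeta_Qpoly_eq0.
    by rewrite (leq_ltn_trans (size_poly _ _)) ?prednK ?prime_gt0.
  have zeta_neq0 : zeta != 0 by rewrite (prim_root_eq0 zeta_prim) -lt0n prime_gt0.
  rewrite /root -(mulrI_eq0 _ (mulfI zeta_neq0)) -[X in _ == X]rel_d sum_Fp //.
  rewrite -(big_mkord xpredT (fun k => ratr (d k%:R) * zeta ^+ (k%:R : 'F_p))).
  rewrite big_ltn ?prime_gt0 // big_add1 big_mkord /d subrr rmorph0 mul0r add0r.
  rewrite (@horner_coef_wide _ p.-1) ?size_map_poly ?size_poly // mulr_sumr.
  apply/eqP; apply: eq_bigr => k _.
  by rewrite coef_map coef_poly ltn_ord /= zeta_expr_natFp exprS mulrCA.
move=> a; apply/eqP; rewrite -subr_eq0; apply/eqP.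
have [->|a_neq0] := eqVneq a 0; first by rewrite subrr.
have a_gt0 : (0 < val a)%N by rewrite lt0n; apply: contra a_neq0 => /eqP a0; apply/eqP/val_inj.
have := congr1 (fun q : {poly rat} => q`_(val a).-1) P0.
rewrite /= coef_poly coef0 prednK // -ltnS prednK ?prime_gt0 // Fp_val_lt //.
by rewrite natr_Zp.
Qed.

Lemma in_Qzeta_sum x :
  in_Qzeta zeta x -> exists beta : 'F_p -> rat, x = \sum_a ratr (beta a) * zeta ^+ a.
Proof.
case=> q ->; exists (fun a => \sum_(i < size q) (if (i%:R : 'F_p) == a then q`_i else 0)).
rewrite horner_coef size_map_poly; symmetry.
under eq_bigr do rewrite rmorph_sum mulr_suml.
rewrite exchange_big; apply: eq_bigr => i _.
rewrite (bigD1 i%:R) //= eqxx big1 ?addr0; first by rewrite zeta_expr_natFp coef_map.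
by move=> a a_neq_i; rewrite eq_sym (negPf a_neq_i) rmorph0 mul0r.
Qed.

Definition gauss_period (m j : nat) : algC :=
  \sum_(e < p.-1 | (e %% m == j)%N) zeta ^+ (gamma ^+ e)%R.

Lemma iter_sigma_coef_invariant m (beta : 'F_p -> rat) :
  iter m sigma (\sum_a ratr (beta a) * zeta ^+ a) = \sum_a ratr (beta a) * zeta ^+ a ->
  forall b, beta (gamma ^+ m * b) = beta b.
Proof.
move=> beta_fixed b; set G := gamma ^+ m.
have G_neq0 : G != 0 by rewrite expf_neq0 // (prim_root_Fp_neq0 p_pr gamma_prim).
suff rel : \sum_a ratr (beta (G^-1 * a) - beta a) * zeta ^+ a = 0.
  have := zeta_Fp_relation rel (G * b).
  by rewrite mulKf // mulr0 subrr => /eqP; rewrite subr_eq0 eq_sym => /eqP.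
under eq_bigr do rewrite rmorphB mulrBl.
apply/eqP; rewrite sumrB subr_eq0; apply/eqP.
rewrite -[RHS]beta_fixed -[RHS]/(rmorph_iter sigma m _) rmorph_sum.
rewrite (reindex_inj (mulfI G_neq0)); apply: eq_bigr => a _.
rewrite rmorphM fmorph_rat mulKf //; congr (_ * _).
exact: esym (iter_sigma_zeta m a).
Qed.

Lemma gauss_period_span m x : (0 < m)%N -> in_Qzeta zeta x -> iter m sigma x = x ->
  exists a : 'rV[rat]_m, x = \sum_(j < m) ratr (a 0 j) * gauss_period m j.
Proof.
move=> m_gt0 /in_Qzeta_sum[beta ->] /iter_sigma_coef_invariant inv_beta.
have inv_beta_k k b : beta (gamma ^+ m ^+ k * b) = beta b.
  by elim: k => [|k IH]; rewrite ?expr0 ?mul1r // exprS -mulrA inv_beta IH.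
have beta_mod (e : nat) : beta (gamma ^+ e) = beta (gamma ^+ (e %% m)%N).
  by rewrite {1}(divn_eq e m) exprD mulnC exprM inv_beta_k.
exists (\row_j (beta (gamma ^+ j) - beta 0)).
transitivity (\sum_a ratr (beta a - beta 0) * zeta ^+ a).
  under [RHS]eq_bigr do rewrite rmorphB mulrBl.
  by rewrite sumrB -mulr_sumr sum_zeta_Fp mulr0 subr0.
rewrite (bigD1 0) //= subrr rmorph0 mul0r add0r (sum_Fp_units p_pr gamma_prim).
rewrite (eq_bigr (fun e : 'I_p.-1 =>
  ratr (beta (gamma ^+ (e %% m)%N) - beta 0) * zeta ^+ (gamma ^+ e)%R)); last first.
  by move=> e _; rewrite -beta_mod.
rewrite /gauss_period; under [RHS]eq_bigr do rewrite mxE mulr_sumr.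
rewrite (partition_big (fun e : 'I_p.-1 => Ordinal (ltn_pmod e m_gt0)) xpredT) //=.
by apply: eq_bigr => j _; apply: eq_big => [e|e /eqP <-].
Qed.

End GaussPeriods.

Lemma adjoin_seq_ind (F : fieldType) (L : fieldExtType F) (P : L -> Prop)
    (K : {subfield L}) (rs : seq L) :
  (forall x y, P x -> P y -> P (x + y)) -> (forall x y, P x -> P y -> P (x * y)) ->
  {in K, forall x, P x} -> {in rs, forall x, P x} -> {in <<K & rs>>%VS, forall x, P x}.
Proof.
move=> PD PM; elim: rs K => [|x rs IH] K PK Prs y; first by rewrite Fadjoin_nil; apply: PK.
rewrite adjoin_cons; apply: IH => [z /Fadjoin_polyP[q Kq ->]|z rs_z]; last first.
  by apply: Prs; rewrite inE rs_z orbT.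
have Px : P x by apply: Prs; rewrite inE eqxx.
rewrite horner_coef; apply: (big_ind P) => [|//|i _]; first exact/PK/mem0v.
apply: (PM); first exact/PK/(polyOverP Kq).
by elim: (nat_of_ord i) => [|k IHk]; rewrite ?expr0 ?exprS; [apply/PK/mem1v | apply: (PM)].
Qed.

Section GeneratedNumField.
Variables (p : nat) (zeta : algC) (gamma : 'F_p) (sigma : {rmorphism algC -> algC}).
Hypotheses (p_pr : prime p) (zeta_prim : p.-primitive_root zeta).
Hypotheses (gamma_prim : (p.-1).-primitive_root gamma) (sigma_zeta : sigma zeta = zeta ^+ gamma).
Variables (S : seq algC) (m : nat).
Hypotheses (m_gt0 : (0 < m)%N) (S_Qzeta : {in S, forall w, in_Qzeta zeta w}).
Hypothesis fixS : forall k, {in S, forall w, iter k sigma w = w} <-> (m %| k)%N.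
Variables (L : fieldExtType rat) (QsC : {rmorphism L -> algC}) (rs : seq L).
Hypotheses (def_S : map QsC rs = S) (genL : <<1 & rs>>%VS = fullv).

Lemma generated_in_Qzeta_fixed y : in_Qzeta zeta (QsC y) /\ iter m sigma (QsC y) = QsC y.
Proof.
pose P y := in_Qzeta zeta (QsC y) /\ iter m sigma (QsC y) = QsC y.
apply: (@adjoin_seq_ind _ _ P 1%AS rs _ _ _ _ y); last by rewrite genL memvf.
- move=> u v [[q1 Qu] fix_u] [[q2 Qv] fix_v]; rewrite /P rmorphD iter_rmorphD fix_u fix_v.
  by split=> //; exists (q1 + q2); rewrite rmorphD hornerD Qu Qv.
- move=> u v [[q1 Qu] fix_u] [[q2 Qv] fix_v]; rewrite /P rmorphM iter_rmorphM fix_u fix_v.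
  by split=> //; exists (q1 * q2); rewrite rmorphM hornerM Qu Qv.
- move=> _ /vlineP[a ->]; rewrite /P rmorphZ_num rmorph1 mulr1.
  split; last exact: fmorph_rat (rmorph_iter sigma m) a.
  by exists a%:P; rewrite map_polyC hornerC.
- move=> u rs_u; have S_u : QsC u \in S by rewrite -def_S map_f.
  by split; [apply: S_Qzeta | apply: (fixS m).2].
Qed.

Lemma dim_generated_leq : (\dim {:L} <= m)%N.
Proof.
apply: (dim_leq_span (f := QsC) (eta := fun j : 'I_m => gauss_period zeta gamma m j)) => y.
have [Qy fix_y] := generated_in_Qzeta_fixed y.
have [a def_y] := gauss_period_span p_pr zeta_prim gamma_prim sigma_zeta m_gt0 Qy fix_y.
by exists a.
Qed.

(* For i < j < m, m does not divide j - i, so sigma^(j - i) moves some generator: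
   the embeddings sigma^i \o QsC, i < m, are pairwise distinct. *)
Lemma dim_generated_geq : (m <= \dim {:L})%N.
Proof.
pose phi i : {rmorphism L -> algC} := rmorph_iter sigma i \o QsC.
have phi_sep (i j : 'I_m) : (i < j)%N -> exists y, phi i y != phi j y.
  move=> lt_ij; have [w S_w w_moved] : exists2 w, w \in S & iter (j - i) sigma w != w.
    apply/(allPn (a := fun w => iter (j - i) sigma w == w))/negP => /allP fixed.
    have : (m %| j - i)%N by apply: (fixS _).1 => w S_w; apply/eqP/fixed.
    by rewrite gtnNdvd ?subn_gt0 // (leq_ltn_trans (leq_subr _ _)).
  move: S_w w_moved; rewrite -def_S => /mapP[y _ ->] y_moved; exists y.
  apply: contra y_moved => /eqP phi_ij; apply/eqP/(fmorph_inj (rmorph_iter sigma i)).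
  change (iter i sigma (iter (j - i) sigma (QsC y)) = iter i sigma (QsC y)).
  by rewrite -iterD subnKC ?(ltnW lt_ij) //; apply: esym phi_ij.
apply: (dim_geq_embeddings (phi := phi)) => i j; rewrite neq_ltn.
by case/orP=> [/phi_sep // | /phi_sep[y]]; exists y; rewrite eq_sym.
Qed.

End GeneratedNumField.

Lemma degQ_iter_order p zeta (gamma : 'F_p) (sigma : {rmorphism algC -> algC})
    (S : seq algC) m :
  prime p -> p.-primitive_root zeta -> (p.-1).-primitive_root gamma ->
  sigma zeta = zeta ^+ gamma -> (0 < m)%N -> {in S, forall w, in_Qzeta zeta w} ->
  (forall k, {in S, forall w, iter k sigma w = w} <-> (m %| k)%N) ->
  degQ S = m.
Proof.
move=> p_pr zeta_prim gamma_prim sigma_zeta m_gt0 S_Qzeta fixS.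
rewrite /degQ; case: (num_field_exists S) => L [QsC [rs def_S genL]] /=.
apply/eqP; rewrite eqn_leq.
by rewrite (dim_generated_leq p_pr zeta_prim gamma_prim sigma_zeta m_gt0 S_Qzeta fixS def_S genL)
  (dim_generated_geq fixS def_S).
Qed.

Lemma perm_order_on_dvd (f : algC -> algC) (S : seq algC) m :
  (0 < m)%N -> (forall k, {in S, forall w, iter k f w = w} <-> (m %| k)%N) ->
  perm_order_on f S m.
Proof.
move=> m_gt0 fixS; split=> // [|k k_gt0 /fixS /dvdn_leq]; last exact.
exact/(fixS m).2.
Qed.

(* With t = 1/s modulo N, (g / g^t)^s = g^(s-1), whose order is N / gcd(N, s - 1),
   and raising to the power t (coprime to that order) recovers g / g^t. *)
Lemma div_expr_prim_root (R : fieldType) (N s t : nat) (g : R) :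
  N.-primitive_root g -> coprime s N -> (0 < s)%N -> (s * t = 1 %[mod N])%N ->
  (N %/ gcdn N s.-1).-primitive_root (g / g ^+ t).
Proof.
move=> g_prim s_coprime s_gt0 st.
have g_neq0 : g != 0 by rewrite (prim_root_eq0 g_prim) -lt0n (prim_order_gt0 g_prim).
have expr_st (x : R) : x ^+ N = 1 -> x ^+ (s * t) = x.
  by move=> xN; rewrite -(expr_mod _ xN) st (expr_mod _ xN) expr1.
set e := g / g ^+ t.
have eN : e ^+ N = 1.
  by rewrite exprMn exprVn -exprM mulnC exprM (prim_expr_order g_prim) expr1n invr1 mulr1.
have es : e ^+ s = g ^+ s.-1.
  rewrite exprMn exprVn -exprM mulnC expr_st ?(prim_expr_order g_prim) //.
  by rewrite -{1}(prednK s_gt0) exprS mulrAC divff // mul1r.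
have t_coprime : coprime t N.
  have := coprime_modl (s * t) N.
  by rewrite st coprime_modl coprime1n coprimeMl => /esym/andP[].
rewrite -[e](expr_st _ eN) exprM prim_root_exp_coprime; last by rewrite es gcdnC exp_prim_root.
by rewrite (coprime_dvdr _ t_coprime) // dvdn_div // dvdn_gcdl.
Qed.

Lemma prime_eq1_mod_double_order (p s : nat) :
  prime p -> (2 < p)%N -> coprime s p.-1 -> (p = 1 %[mod 2 * (p.-1 %/ gcdn p.-1 s.-1)])%N.
Proof.
move=> p_pr p_gt2 s_coprime; set g := gcdn p.-1 s.-1.
have even_p1 : (2 %| p.-1)%N.
  rewrite dvdn2 -oddS prednK ?prime_gt0 //.
  by case/even_prime: p_pr p_gt2 => [->|].
have odd_s : odd s by rewrite -coprimen2 (coprime_dvdr even_p1).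
have even_g : (2 %| g)%N by rewrite dvdn_gcd even_p1 dvdn2 -oddS prednK ?odd_gt0.
have def_p : p = ((g %/ 2) * (2 * (p.-1 %/ g)) + 1)%N.
  by rewrite mulnA (divnK even_g) mulnC divnK ?dvdn_gcdl // addn1 prednK ?prime_gt0.
by rewrite {1}def_p modnMDl.
Qed.

Section WlistOrbit.
Variables (p n : nat) (K : finFieldType) (s : nat) (zeta : algC) (gamma : 'F_p).
Variables (sigma : {rmorphism algC -> algC}) (t : nat).
Hypotheses (chK : p \in [pchar K]) (cardK : #|K| = (p ^ n)%N).
Hypotheses (s_gt0 : (0 < s)%N) (s_coprime : coprime s (p ^ n).-1).
Hypotheses (zeta_prim : p.-primitive_root zeta) (gamma_prim : (p.-1).-primitive_root gamma).
Hypotheses (sigma_zeta : sigma zeta = zeta ^+ gamma) (st : (s * t = 1 %[mod p.-1])%N).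

Lemma Wlist_in_Qzeta : {in Wlist K p n s zeta, forall w, in_Qzeta zeta w}.
Proof.
move=> _ /mapP[u _ ->]; exists (\sum_x 'X^(trace_nat p n (x ^+ s - u * x))).
rewrite rmorph_sum horner_sum; apply: eq_bigr => x _.
by rewrite /= map_polyXn hornerXn.
Qed.

Lemma Wlist_iter_fixed_dvd k :
  {in Wlist K p n s zeta, forall w, iter k sigma w = w} <->
  (p.-1 %/ gcdn p.-1 s.-1 %| k)%N.
Proof.
have s_coprime_p1 : coprime s p.-1 := coprime_dvdr (dvdn_pred_predX p n) s_coprime.
have e_prim := div_expr_prim_root gamma_prim s_coprime_p1 s_gt0 st.
(* pPrimeCharType chK is K as an 'F_p-algebra, so in_alg embeds 'F_p into K. *)
pose iota := in_alg (pPrimeCharType chK).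
have sigma_psi x : sigma (psi p n zeta x) = psi p n zeta (iota gamma * x).
  by rewrite (psi_natrM chK cardK zeta_prim sigma_zeta) -[iota gamma]/(gamma%:R * 1) mulr1.
have gamma_neq0 := prim_root_Fp_neq0 (pcharf_prime chK) gamma_prim.
have d_neq0 : iota (gamma ^+ t)^-1 != 0 by rewrite fmorph_eq0 invr_eq0 expf_neq0.
have gds : iota gamma * iota (gamma ^+ t)^-1 ^+ s = 1.
  rewrite -rmorphXn -rmorphM exprVn -exprM -(prim_expr_mod gamma_prim) mulnC st.
  by rewrite (prim_expr_mod gamma_prim) expr1 divff ?rmorph1.
have sigma_W := @rmorph_Wsum K p n s zeta sigma _ _ sigma_psi d_neq0 gds.
rewrite (prim_order_dvd e_prim) -(fmorph_eq1 iota) rmorphXn rmorphM -(rwP eqP).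
have c_neq0 : iota gamma * iota (gamma ^+ t)^-1 != 0 by rewrite mulf_neq0 // fmorph_eq0.
exact (Wlist_iter_fixed_iff chK cardK zeta_prim s_gt0 s_coprime sigma_W c_neq0 k).
Qed.

End WlistOrbit.

Unset Implicit Arguments.

Theorem proposition2p1
  (p n : nat) (K : finFieldType) (s : nat)
  (zeta : algC) (gamma : 'F_p) (sigma : {rmorphism algC -> algC}) (t : nat) :
  prime p -> p \in [pchar K] -> #|K| = (p ^ n)%N ->
  (0 < s)%N -> coprime s (p ^ n).-1 ->
  p.-primitive_root zeta ->
  (p.-1).-primitive_root gamma ->
  sigma zeta = zeta ^+ gamma ->
  (s * t = 1 %[mod p.-1])%N ->
  let m := (p.-1 %/ gcdn p.-1 s.-1)%N in
  [/\ perm_order_on sigma (Wlist K p n s zeta) m,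
      degQ (Wlist K p n s zeta) = m,
      m.-primitive_root (gamma / gamma ^+ t),
      (p = 2%N -> m = 1%N) &
      ((2 < p)%N -> (p = 1 %[mod 2 * m])%N)].
Proof.
move=> p_pr chK cardK s_gt0 s_coprime zeta_prim gamma_prim sigma_zeta st m.
have s_coprime_p1 : coprime s p.-1 := coprime_dvdr (dvdn_pred_predX p n) s_coprime.
have e_prim : m.-primitive_root (gamma / gamma ^+ t).
  exact: div_expr_prim_root gamma_prim s_coprime_p1 s_gt0 st.
have m_gt0 := prim_order_gt0 e_prim.
have fixW := Wlist_iter_fixed_dvd chK cardK s_gt0 s_coprime zeta_prim gamma_prim sigma_zeta st.
split=> //.
- exact: perm_order_on_dvd m_gt0 fixW.
- exact: degQ_iter_order p_pr zeta_prim gamma_prim sigma_zeta m_gt0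
    (@Wlist_in_Qzeta p n K s zeta) fixW.
- by move=> p2; rewrite /m p2 gcd1n.
- by move=> p_gt2; apply: prime_eq1_mod_double_order.
Qed.
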